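(* The category $lrTORS$ of bitorsors is equivalent to the category of fibrations-in-groupoids $\gamma:\mathbf X\to\mathbf I$ over $\mathbf I$ whose total category $\mathbf X$ is inhabited (morphisms being functors $\mathbf X\to\mathbf X'$ commuting with the projections to $\mathbf I$).
   Context: Groupoids are inhabited; composition is written left to right. $\mathbf I$ is the groupoid with two objects $a_0,b_0$, and, besides the identities, exactly one arrow $i:a_0\to b_0$ and its inverse $i^{-1}:b_0\to a_0$. A fibration-in-groupoids over $\mathbf I$ is a Grothendieck fibration $\gamma:\mathbf X\to\mathbf I$ whose fibres are groupoids (equivalently all arrows of $\mathbf X$ are cartesian); here $\mathbf X$ is then itself a groupoid. A bitorsor consists of a span $A\xleftarrow{\alpha}X\xrightarrow{\beta}B$ of sets, a groupoid $\mathbf G$ with object set $A$ acting on the left on $\alpha$ (for $\alpha(x)=d_1(g)$, an element $g\cdot x$ with $\alpha(g\cdot x)=d_0(g)$, unital and associative), and a groupoid $\mathbf H$ with object set $B$ acting on the right on $\beta$ (for $\beta(x)=d_0(h)$, an element $x\cdot h$ with $\beta(x\cdot h)=d_1(h)$), such that the actions commute ($(g\cdot x)\cdot h=g\cdot(x\cdot h)$), $X$ is inhabited, $\alpha$ and $\beta$ are surjective, for $x,y$ there is at most one $g$ with $g\cdot x=y$ and at most one $h$ with $x\cdot h=y$, $\beta$ is the quotient map of $X$ by the relation ''$y=g\cdot x$ for some $g$'', and $\alpha$ is the quotient map by the relation ''$y=x\cdot h$ for some $h$''. A morphism of bitorsors is a pair of functors $\mathbf G\to\mathbf G'$, $\mathbf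 H\to\mathbf H'$ and a map $X\to X'$ compatible with the span maps and both actions. *)

Set Implicit Arguments.
Unset Strict Implicit.

(* d0 f = domain (source), d1 f = codomain (target).                   *)
(* Composition is written LEFT TO RIGHT: ccomp f g = "f then g",       *)
(* meaningful when d1 f = d0 g (a total function; its values on        *)
(* non-composable pairs are irrelevant).                               *)
Record Category := {
  cob : Type;
  car : Type;
  d0 : car -> cob;
  d1 : car -> cob;
  cid : cob -> car;
  ccomp : car -> car -> car;
  d0_id : forall a, d0 (cid a) = a;
  d1_id : forall a, d1 (cid a) = a;
  d0_comp : forall f g, d1 f = d0 g -> d0 (ccomp f g) = d0 f;
  d1_comp : forall f g, d1 f = d0 g -> d1 (ccomp f g) = d1 g;
  comp_id_l : forall f, ccomp (cid (d0 f)) f = f;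
  comp_id_r : forall f, ccomp f (cid (d1 f)) = f;
  comp_assoc : forall f g h, d1 f = d0 g -> d1 g = d0 h ->
      ccomp (ccomp f g) h = ccomp f (ccomp g h)
}.
Arguments d0 {_} _.
Arguments d1 {_} _.
Arguments cid {_} _.
Arguments ccomp {_} _ _.

Record Groupoid := {
  gcat :> Category;
  ginv : car gcat -> car gcat;
  d0_inv : forall f, d0 (ginv f) = d1 f;
  d1_inv : forall f, d1 (ginv f) = d0 f;
  comp_inv_r : forall f, ccomp f (ginv f) = cid (d0 f);
  comp_inv_l : forall f, ccomp (ginv f) f = cid (d1 f);
  ginh : inhabited (cob gcat)
}.

Record Functor (C D : Category) := {
  fob : cob C -> cob D;
  far : car C -> car D;
  f_d0 : forall f, d0 (far f) = fob (d0 f);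
  f_d1 : forall f, d1 (far f) = fob (d1 f);
  f_id : forall a, far (cid a) = cid (fob a);
  f_comp : forall f g, d1 f = d0 g -> far (ccomp f g) = ccomp (far f) (far g)
}.
Arguments fob {_ _} _ _.
Arguments far {_ _} _ _.

Definition functor_id (C : Category) : Functor C C.
Proof.
  refine {| fob := fun a => a; far := fun f => f |}; reflexivity.
Defined.

Definition functor_comp (C D E : Category) (F : Functor C D) (G : Functor D E)
  : Functor C E.
Proof.
  refine {| fob := fun a => fob G (fob F a); far := fun f => far G (far F f) |}.
  - intro f; rewrite f_d0, f_d0; reflexivity.
  - intro f; rewrite f_d1, f_d1; reflexivity.
  - intro a; rewrite f_id, f_id; reflexivity.
  - intros f g H. rewrite (f_comp F H), f_comp; [reflexivity|].
    rewrite f_d1, f_d0, H; reflexivity.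
Defined.

(* Hcomp f g = "f then g".                                            *)
Record Cat := {
  Ob : Type;
  Hom : Ob -> Ob -> Type;
  Heq : forall a b, Hom a b -> Hom a b -> Prop;
  Hid : forall a, Hom a a;
  Hcomp : forall a b c, Hom a b -> Hom b c -> Hom a c;
  Heq_refl : forall a b (f : Hom a b), Heq f f;
  Heq_sym : forall a b (f g : Hom a b), Heq f g -> Heq g f;
  Heq_trans : forall a b (f g h : Hom a b), Heq f g -> Heq g h -> Heq f h;
  Hcomp_resp : forall a b c (f f' : Hom a b) (g g' : Hom b c),
      Heq f f' -> Heq g g' -> Heq (Hcomp f g) (Hcomp f' g');
  Hcomp_id_l : forall a b (f : Hom a b), Heq (Hcomp (Hid a) f) f;
  Hcomp_id_r : forall a b (f : Hom a b), Heq (Hcomp f (Hid b)) f;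
  Hcomp_assoc : forall a b c d (f : Hom a b) (g : Hom b c) (h : Hom c d),
      Heq (Hcomp (Hcomp f g) h) (Hcomp f (Hcomp g h))
}.
Arguments Hom {_} _ _.
Arguments Heq {_ _ _} _ _.
Arguments Hid {_} _.
Arguments Hcomp {_ _ _ _} _ _.

Record CFunctor (C D : Cat) := {
  Fo : Ob C -> Ob D;
  Fm : forall a b, Hom a b -> Hom (Fo a) (Fo b);
  Fm_resp : forall a b (f g : Hom a b), Heq f g -> Heq (Fm f) (Fm g);
  Fm_id : forall a, Heq (Fm (Hid a)) (Hid (Fo a));
  Fm_comp : forall a b c (f : Hom a b) (g : Hom b c),
      Heq (Fm (Hcomp f g)) (Hcomp (Fm f) (Fm g))
}.
Arguments Fo {_ _} _ _.
Arguments Fm {_ _} _ {_ _} _.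

Definition NatIso (C D : Cat) (F0 G0 : Ob C -> Ob D)
  (F1 : forall a b, Hom a b -> Hom (F0 a) (F0 b))
  (G1 : forall a b, Hom a b -> Hom (G0 a) (G0 b)) : Prop :=
  exists (eta : forall a, Hom (F0 a) (G0 a)) (eta' : forall a, Hom (G0 a) (F0 a)),
    (forall a, Heq (Hcomp (eta a) (eta' a)) (Hid (F0 a))) /\
    (forall a, Heq (Hcomp (eta' a) (eta a)) (Hid (G0 a))) /\
    (forall a b (f : Hom a b), Heq (Hcomp (F1 a b f) (eta b)) (Hcomp (eta a) (G1 a b f))).
Arguments NatIso {C D} F0 G0 F1 G1.

Definition CatEquiv (C D : Cat) : Prop :=
  exists (F : CFunctor C D) (G : CFunctor D C),
    NatIso (fun a => Fo G (Fo F a)) (fun a => a)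
           (fun a b f => Fm G (Fm F f)) (fun a b f => f) /\
    NatIso (fun b => Fo F (Fo G b)) (fun b => b)
           (fun a b f => Fm F (Fm G f)) (fun a b f => f).

Record Bitorsor := {
  tG : Groupoid;            (* object set A = cob tG *)
  tH : Groupoid;            (* object set B = cob tH *)
  tX : Type;
  alpha : tX -> cob tG;
  beta : tX -> cob tH;
  lact : car tG -> tX -> tX;   (* lact g x = g . x, meaningful if alpha x = d1 g *)
  ract : tX -> car tH -> tX;   (* ract x h = x . h, meaningful if beta x = d0 h *)
  lact_alpha : forall g x, alpha x = d1 g -> alpha (lact g x) = d0 g;
  lact_id : forall x, lact (cid (alpha x)) x = x;
  lact_assoc : forall g g' x, d1 g = d0 g' -> alpha x = d1 g' ->
      lact (ccomp g g') x = lact g (lact g' x);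
  ract_beta : forall x h, beta x = d0 h -> beta (ract x h) = d1 h;
  ract_id : forall x, ract x (cid (beta x)) = x;
  ract_assoc : forall x h h', beta x = d0 h -> d1 h = d0 h' ->
      ract (ract x h) h' = ract x (ccomp h h');
  act_comm : forall g x h, alpha x = d1 g -> beta x = d0 h ->
      ract (lact g x) h = lact g (ract x h);
  X_inh : inhabited tX;
  alpha_surj : forall a, exists x, alpha x = a;
  beta_surj : forall b, exists x, beta x = b;
  lact_free : forall g g' x, alpha x = d1 g -> alpha x = d1 g' ->
      lact g x = lact g' x -> g = g';
  ract_free : forall h h' x, beta x = d0 h -> beta x = d0 h' ->
      ract x h = ract x h' -> h = h';
  (* beta is the quotient map by "y = g . x for some g" *)
  beta_quot : forall x y, beta x = beta y <-> exists g, alpha x = d1 g /\ y = lact g x;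
  (* alpha is the quotient map by "y = x . h for some h" *)
  alpha_quot : forall x y, alpha x = alpha y <-> exists h, beta x = d0 h /\ y = ract x h
}.

Record BitorsorMor (T T' : Bitorsor) := {
  mG : Functor (tG T) (tG T');
  mH : Functor (tH T) (tH T');
  mX : tX T -> tX T';
  m_alpha : forall x, alpha (mX x) = fob mG (alpha x);
  m_beta : forall x, beta (mX x) = fob mH (beta x);
  m_lact : forall g x, alpha x = d1 g ->
      mX (lact g x) = lact (far mG g) (mX x);
  m_ract : forall x h, beta x = d0 h ->
      mX (ract x h) = ract (mX x) (far mH h)
}.
Arguments mG {_ _} _.
Arguments mH {_ _} _.
Arguments mX {_ _} _ _.

Definition bmor_eq (T T' : Bitorsor) (m m' : BitorsorMor T T') : Prop :=
  (forall a, fob (mG m) a = fob (mG m') a) /\ (forall g, far (mG m) g = far (mG m') g) /\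
  (forall b, fob (mH m) b = fob (mH m') b) /\ (forall h, far (mH m) h = far (mH m') h) /\
  (forall x, mX m x = mX m' x).

Definition bmor_id (T : Bitorsor) : BitorsorMor T T.
Proof.
  refine {| mG := functor_id _; mH := functor_id _; mX := fun x => x |};
    reflexivity.
Defined.

Definition bmor_comp (T1 T2 T3 : Bitorsor) (m : BitorsorMor T1 T2) (n : BitorsorMor T2 T3)
  : BitorsorMor T1 T3.
Proof.
  refine {| mG := functor_comp (mG m) (mG n); mH := functor_comp (mH m) (mH n);
            mX := fun x => mX n (mX m x) |}; simpl.
  - intro x; rewrite m_alpha, m_alpha; reflexivity.
  - intro x; rewrite m_beta, m_beta; reflexivity.
  - intros g x H. rewrite (m_lact m H), m_lact; [reflexivity|].
    rewrite m_alpha, f_d1, H; reflexivity.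
  - intros x h H. rewrite (m_ract m H), m_ract; [reflexivity|].
    rewrite m_beta, f_d0, H; reflexivity.
Defined.

Definition lrTORS : Cat.
Proof.
  refine {| Ob := Bitorsor; Hom := BitorsorMor; Heq := bmor_eq;
            Hid := bmor_id; Hcomp := bmor_comp |}; unfold bmor_eq; simpl.
  - intros; repeat split; reflexivity.
  - intros a b f g (H1&H2&H3&H4&H5); repeat split; intros; symmetry; auto.
  - intros a b f g h (H1&H2&H3&H4&H5) (K1&K2&K3&K4&K5); repeat split; intros;
      etransitivity; eauto.
  - intros a b c f f' g g' (H1&H2&H3&H4&H5) (K1&K2&K3&K4&K5); repeat split; intros;
      congruence.
  - intros; repeat split; reflexivity.
  - intros; repeat split; reflexivity.
  - intros; repeat split; reflexivity.
Defined.

Inductive Iob := a0 | b0.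
Inductive Iar := ida0 | idb0 | iarr | iinv.

Definition I_d0 (f : Iar) : Iob :=
  match f with ida0 => a0 | idb0 => b0 | iarr => a0 | iinv => b0 end.
Definition I_d1 (f : Iar) : Iob :=
  match f with ida0 => a0 | idb0 => b0 | iarr => b0 | iinv => a0 end.
Definition I_id (a : Iob) : Iar := match a with a0 => ida0 | b0 => idb0 end.
(* left-to-right composition; values on non-composable pairs are junk *)
Definition I_comp (f g : Iar) : Iar :=
  match f, g with
  | ida0, _ => g
  | idb0, _ => g
  | _, ida0 => f
  | _, idb0 => f
  | iarr, iinv => ida0
  | iinv, iarr => idb0
  | iarr, iarr => iarr
  | iinv, iinv => iinv
  end.

Definition Icat : Category.
Proof.
  refine {| cob := Iob; car := Iar; d0 := I_d0; d1 := I_d1; cid := I_id;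
            ccomp := I_comp |}.
  all: try (intros []; reflexivity).
  all: try (intros [] []; simpl; intro H; try discriminate H; reflexivity).
  intros [] [] []; simpl; intros H K; try discriminate H; try discriminate K;
    reflexivity.
Defined.

Section Fib.
Variables (X : Category) (gam : Functor X Icat).

Definition cartesian (f : car X) : Prop :=
  forall (g : car X) (w : car Icat),
    d1 g = d1 f -> d0 w = fob gam (d0 g) -> d1 w = fob gam (d0 f) ->
    ccomp w (far gam f) = far gam g ->
    exists h : car X,
      (d0 h = d0 g /\ d1 h = d0 f /\ far gam h = w /\ ccomp h f = g) /\
      (forall h' : car X,
          d0 h' = d0 g -> d1 h' = d0 f -> far gam h' = w -> ccomp h' f = g ->
          h' = h).

Definition is_fibration : Prop :=
  forall (e : cob X) (u : car Icat), d1 u = fob gam e ->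
    exists f : car X, d1 f = e /\ far gam f = u /\ cartesian f.

Definition fibres_groupoids : Prop :=
  forall f : car X, far gam f = cid (fob gam (d0 f)) ->
    exists f' : car X, d0 f' = d1 f /\ d1 f' = d0 f /\
      ccomp f f' = cid (d0 f) /\ ccomp f' f = cid (d1 f).
End Fib.

Record FibI := {
  fX : Category;
  fgam : Functor fX Icat;
  f_fib : is_fibration fgam;
  f_gpd : fibres_groupoids fgam;
  fX_inh : inhabited (cob fX)
}.

Record FibMor (P Q : FibI) := {
  mF : Functor (fX P) (fX Q);
  mF_ob : forall e, fob (fgam Q) (fob mF e) = fob (fgam P) e;
  mF_ar : forall f, far (fgam Q) (far mF f) = far (fgam P) f
}.
Arguments mF {_ _} _.

Definition fmor_eq (P Q : FibI) (m m' : FibMor P Q) : Prop :=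
  (forall e, fob (mF m) e = fob (mF m') e) /\ (forall f, far (mF m) f = far (mF m') f).

Definition fmor_id (P : FibI) : FibMor P P.
Proof. refine {| mF := functor_id _ |}; reflexivity. Defined.

Definition fmor_comp (P Q R : FibI) (m : FibMor P Q) (n : FibMor Q R) : FibMor P R.
Proof.
  refine {| mF := functor_comp (mF m) (mF n) |}; simpl.
  - intro e; rewrite mF_ob, mF_ob; reflexivity.
  - intro f; rewrite mF_ar, mF_ar; reflexivity.
Defined.

Definition FibIcat : Cat.
Proof.
  refine {| Ob := FibI; Hom := FibMor; Heq := fmor_eq;
            Hid := fmor_id; Hcomp := fmor_comp |}; unfold fmor_eq; simpl.
  - intros; split; reflexivity.
  - intros a b f g (H1&H2); split; intros; symmetry; auto.
  - intros a b f g h (H1&H2) (K1&K2); split; intros; etransitivity; eauto.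
  - intros a b c f f' g g' (H1&H2) (K1&K2); split; intros; congruence.
  - intros; split; reflexivity.
  - intros; split; reflexivity.
  - intros; split; reflexivity.
Defined.

(* A bitorsor T gives its collage: the category on A + B whose arrows are those of G and
   of H, every x in X as an arrow alpha x -> beta x, and a formal inverse of each x.
   Composites are computed with the two actions and with the divisions "x y^-1" in G and
   "y^-1 x" in H, which exist and are unique because the actions are free and alpha, beta
   are the quotient maps.  Every arrow of the collage is invertible, so its projection to
   I is a fibration in groupoids.  Conversely, in a fibration in groupoids over I every
   arrow of the total category is invertible (lift the reverse arrow of I and invert the
   vertical composite); the fibres over a0 and b0 then act by composition on the arrows
   over i, and these form a bitorsor.  The comparison morphisms from T to the bitorsor of
   its collage, and from the collage of the bitorsor of P to P, are natural and bijective
   on all data, hence invertible. *)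

From Stdlib Require Import ClassicalEpsilon ProofIrrelevance FinFun.

Set Implicit Arguments.
Unset Strict Implicit.

Lemma sig_eq (A : Type) (P : A -> Prop) (u v : {a : A | P a}) :
  proj1_sig u = proj1_sig v -> u = v.
Proof. apply eq_sig_hprop; intros; apply proof_irrelevance. Qed.

Definition bijective (A B : Type) (f : A -> B) : Prop := Injective f /\ Surjective f.

Section InverseMap.
Variables (A B : Type) (f : A -> B) (f_bij : bijective f).

Definition inverse_map (b : B) : A :=
  proj1_sig (constructive_indefinite_description _ (proj2 f_bij b)).

Lemma inverse_map_r (b : B) : f (inverse_map b) = b.
Proof. exact (proj2_sig (constructive_indefinite_description _ (proj2 f_bij b))). Qed.

Lemma inverse_map_l (a : A) : inverse_map (f a) = a.
Proof. apply (proj1 f_bij), inverse_map_r. Qed.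

End InverseMap.

(** * Categories and groupoids *)

Lemma cid_comp_cid (C : Category) (a : cob C) : ccomp (cid a) (cid a) = cid a.
Proof. rewrite <- (d0_id a) at 1; apply comp_id_l. Qed.

Definition is_inverse (C : Category) (f f' : car C) : Prop :=
  d0 f' = d1 f /\ d1 f' = d0 f /\ ccomp f f' = cid (d0 f) /\ ccomp f' f = cid (d1 f).

Definition groupoid_of_inverses (C : Category) (inv : forall f : car C, exists f', is_inverse f f')
  (inh : inhabited (cob C)) : Groupoid.
Proof.
  refine {| gcat := C;
            ginv := fun f => proj1_sig (constructive_indefinite_description _ (inv f)) |}.
  all: try exact inh.
  all: intro f; destruct (constructive_indefinite_description _ (inv f)) as (f' & Hf');
       apply Hf'.
Defined.

Section GroupoidFacts.
Variable G : Groupoid.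

Lemma ginv_unique (f f' : car G) :
  d1 f = d0 f' -> ccomp f f' = cid (d0 f) -> ginv f = f'.
Proof.
  intros H1 H2.
  rewrite <- (comp_id_r (ginv f)), d1_inv, <- H2.
  rewrite <- comp_assoc by (rewrite ?d1_inv, ?d0_inv; auto).
  rewrite comp_inv_l, H1, comp_id_l; reflexivity.
Qed.

Lemma ginv_id (a : cob G) : ginv (cid a) = cid a.
Proof. apply ginv_unique; rewrite ?d0_id, ?d1_id; auto using cid_comp_cid. Qed.

Lemma ginv_ginv (f : car G) : ginv (ginv f) = f.
Proof. apply ginv_unique; rewrite ?d1_inv, ?d0_inv, ?comp_inv_l; auto. Qed.

Lemma ginv_comp (f g : car G) : d1 f = d0 g -> ginv (ccomp f g) = ccomp (ginv g) (ginv f).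
Proof.
  intro H.
  assert (Hgf : d1 (ginv g) = d0 (ginv f)) by (rewrite d1_inv, d0_inv; auto).
  apply ginv_unique.
  - rewrite d1_comp, d0_comp, d0_inv by assumption; reflexivity.
  - rewrite d0_comp by exact H.
    rewrite comp_assoc, <- (@comp_assoc _ g)
      by (first [ assumption | rewrite d0_inv; reflexivity
                | rewrite d0_comp, d0_inv by exact Hgf; reflexivity ]).
    rewrite comp_inv_r, <- H, <- (d0_inv f), comp_id_l, comp_inv_r; reflexivity.
Qed.

Lemma comp_cancel_r (f f' g : car G) :
  d1 f = d0 g -> d1 f' = d0 g -> ccomp f g = ccomp f' g -> f = f'.
Proof.
  intros H H' E.
  rewrite <- (comp_id_r f), <- (comp_id_r f'), H, H', <- comp_inv_r.
  rewrite <- !comp_assoc, E by (rewrite ?d0_inv; auto); reflexivity.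
Qed.

Lemma comp_cancel_l (g f f' : car G) :
  d1 g = d0 f -> d1 g = d0 f' -> ccomp g f = ccomp g f' -> f = f'.
Proof.
  intros H H' E.
  rewrite <- (comp_id_l f), <- (comp_id_l f'), <- H, <- H', <- comp_inv_l.
  rewrite !comp_assoc, E by (rewrite ?d1_inv; auto); reflexivity.
Qed.

End GroupoidFacts.

Lemma functor_ginv (G G' : Groupoid) (F : Functor G G') (g : car G) :
  far F (ginv g) = ginv (far F g).
Proof.
  symmetry; apply ginv_unique.
  - rewrite f_d1, f_d0, d0_inv; reflexivity.
  - rewrite <- f_comp, comp_inv_r, f_id, f_d0 by (rewrite d0_inv; reflexivity); reflexivity.
Qed.

Lemma far_ginv_vertical (G : Groupoid) (D : Category) (F : Functor G D) (f : car G) (o : cob D) :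
  far F f = cid o -> far F (ginv f) = cid o.
Proof.
  intro Hf.
  assert (Ho : fob F (d1 f) = o) by (rewrite <- f_d1, Hf; apply d1_id).
  assert (Ho' : d1 (far F (ginv f)) = o) by (rewrite f_d1, d1_inv, <- f_d0, Hf; apply d0_id).
  rewrite <- (comp_id_r (far F (ginv f))), Ho'.
  rewrite <- Hf at 1; rewrite <- f_comp by (rewrite d1_inv; reflexivity).
  rewrite comp_inv_l, f_id, Ho; reflexivity.
Qed.

Record functor_bijective (C D : Category) (F : Functor C D) : Prop := {
  fob_bij : bijective (fob F);
  far_bij : bijective (far F)
}.

Section FunctorInverse.
Variables (C D : Category) (F : Functor C D) (F_bij : functor_bijective F).

Let ob_inj := proj1 (fob_bij F_bij).
Let ar_inj := proj1 (far_bij F_bij).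

Definition functor_inverse : Functor D C.
Proof.
  refine {| fob := inverse_map (fob_bij F_bij); far := inverse_map (far_bij F_bij) |}.
  - intro g; apply ob_inj; rewrite <- f_d0, !inverse_map_r; reflexivity.
  - intro g; apply ob_inj; rewrite <- f_d1, !inverse_map_r; reflexivity.
  - intro a; apply ar_inj; rewrite f_id, !inverse_map_r; reflexivity.
  - intros g h H; apply ar_inj.
    rewrite f_comp, !inverse_map_r; [reflexivity|].
    apply ob_inj; rewrite <- f_d1, <- f_d0, !inverse_map_r; exact H.
Defined.

End FunctorInverse.

Record bmor_bijective (T T' : Bitorsor) (m : BitorsorMor T T') : Prop := {
  bij_G : functor_bijective (mG m);
  bij_H : functor_bijective (mH m);
  bij_X : bijective (mX m)
}.

Section BitorsorMorInverse.
Variables (T T' : Bitorsor) (m : BitorsorMor T T') (m_bij : bmor_bijective m).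

Let Gob_inj := proj1 (fob_bij (bij_G m_bij)).
Let Hob_inj := proj1 (fob_bij (bij_H m_bij)).
Let X_inj := proj1 (bij_X m_bij).

Definition bmor_inverse : BitorsorMor T' T.
Proof.
  refine {| mG := functor_inverse (bij_G m_bij); mH := functor_inverse (bij_H m_bij);
            mX := inverse_map (bij_X m_bij) |}; cbn.
  - intro x; apply Gob_inj; rewrite <- m_alpha, !inverse_map_r; reflexivity.
  - intro x; apply Hob_inj; rewrite <- m_beta, !inverse_map_r; reflexivity.
  - intros g x H; apply X_inj.
    rewrite m_lact, !inverse_map_r; [reflexivity|].
    apply Gob_inj; rewrite <- m_alpha, <- f_d1, !inverse_map_r; exact H.
  - intros x h H; apply X_inj.
    rewrite m_ract, !inverse_map_r; [reflexivity|].
    apply Hob_inj; rewrite <- m_beta, <- f_d0, !inverse_map_r; exact H.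
Defined.

Lemma bmor_inverse_l : bmor_eq (bmor_comp m bmor_inverse) (bmor_id T).
Proof. repeat split; intro; apply inverse_map_l. Qed.

Lemma bmor_inverse_r : bmor_eq (bmor_comp bmor_inverse m) (bmor_id T').
Proof. repeat split; intro; apply inverse_map_r. Qed.

End BitorsorMorInverse.

Section FibMorInverse.
Variables (P Q : FibI) (m : FibMor P Q) (m_bij : functor_bijective (mF m)).

Definition fmor_inverse : FibMor Q P.
Proof.
  refine {| mF := functor_inverse m_bij |}; cbn.
  - intro e; rewrite <- (mF_ob m), inverse_map_r; reflexivity.
  - intro f; rewrite <- (mF_ar m), inverse_map_r; reflexivity.
Defined.

Lemma fmor_inverse_l : fmor_eq (fmor_comp m fmor_inverse) (fmor_id P).
Proof. split; intro; apply inverse_map_l. Qed.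

Lemma fmor_inverse_r : fmor_eq (fmor_comp fmor_inverse m) (fmor_id Q).
Proof. split; intro; apply inverse_map_r. Qed.

End FibMorInverse.

Lemma natiso_of_natural_inverse (C D : Cat) (F0 G0 : Ob C -> Ob D)
  (F1 : forall a b, Hom a b -> Hom (F0 a) (F0 b)) (G1 : forall a b, Hom a b -> Hom (G0 a) (G0 b))
  (eta : forall a, Hom (F0 a) (G0 a)) (eta' : forall a, Hom (G0 a) (F0 a)) :
  (forall a, Heq (Hcomp (eta a) (eta' a)) (Hid (F0 a))) ->
  (forall a, Heq (Hcomp (eta' a) (eta a)) (Hid (G0 a))) ->
  (forall a b (f : Hom a b), Heq (Hcomp (G1 a b f) (eta' b)) (Hcomp (eta' a) (F1 a b f))) ->
  NatIso F0 G0 F1 G1.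
Proof.
  intros iso_l iso_r nat'. exists eta, eta'; split; [exact iso_l | split; [exact iso_r|]].
  intros a b f.
  apply Heq_trans with (Hcomp (Hcomp (eta a) (eta' a)) (Hcomp (F1 a b f) (eta b))).
  { apply Heq_sym, Heq_trans with (Hcomp (Hid _) (Hcomp (F1 a b f) (eta b))).
    - apply Hcomp_resp; [apply iso_l | apply Heq_refl].
    - apply Hcomp_id_l. }
  apply Heq_trans with (Hcomp (eta a) (Hcomp (Hcomp (eta' a) (F1 a b f)) (eta b))).
  { apply Heq_trans with (Hcomp (eta a) (Hcomp (eta' a) (Hcomp (F1 a b f) (eta b)))).
    - apply Hcomp_assoc.
    - apply Hcomp_resp; [apply Heq_refl | apply Heq_sym, Hcomp_assoc]. }
  apply Hcomp_resp; [apply Heq_refl|].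
  apply Heq_trans with (Hcomp (Hcomp (G1 a b f) (eta' b)) (eta b)).
  { apply Hcomp_resp; [apply Heq_sym, nat' | apply Heq_refl]. }
  apply Heq_trans with (Hcomp (G1 a b f) (Hid _)).
  - apply Heq_trans with (Hcomp (G1 a b f) (Hcomp (eta' b) (eta b))).
    + apply Hcomp_assoc.
    + apply Hcomp_resp; [apply Heq_refl | apply iso_r].
  - apply Hcomp_id_r.
Qed.

Lemma I_thin (u v : car Icat) : d0 u = d0 v -> d1 u = d1 v -> u = v.
Proof. destruct u, v; cbn; congruence. Qed.

Lemma I_connected (a b : cob Icat) : exists u : car Icat, d0 u = a /\ d1 u = b.
Proof. destruct a, b; [exists ida0 | exists iarr | exists iinv | exists idb0]; auto. Qed.

Lemma far_I_eq (C : Category) (F : Functor C Icat) (f : car C) (u : car Icat) :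
  fob F (d0 f) = d0 u -> fob F (d1 f) = d1 u -> far F f = u.
Proof. intros H0 H1; apply I_thin; rewrite ?f_d0, ?f_d1; assumption. Qed.

Lemma cartesian_of_inverses (C : Category) (gam : Functor C Icat) :
  (forall f : car C, exists f', is_inverse f f') -> forall f, cartesian gam f.
Proof.
  intros inv f g w Hg Hw0 Hw1 Hw.
  destruct (inv f) as (f' & E0 & E1 & Er & El).
  exists (ccomp g f'); split; [split; [|split; [|split]]|].
  - apply d0_comp; congruence.
  - rewrite d1_comp by congruence; exact E1.
  - apply far_I_eq; rewrite ?d0_comp, ?d1_comp by congruence;
      [rewrite <- Hw0 | rewrite E1, <- Hw1]; reflexivity.
  - rewrite comp_assoc, El, <- Hg by congruence; apply comp_id_r.
  - intros h H0 H1 H2 H3; subst g.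
    rewrite comp_assoc, Er, <- H1 by congruence; symmetry; apply comp_id_r.
Qed.

(** * Bitorsors *)

Section BitorsorCalculus.
Variable T : Bitorsor.

Lemma lact_beta (g : car (tG T)) (x : tX T) : alpha x = d1 g -> beta (lact g x) = beta x.
Proof. intro H; symmetry; apply beta_quot; exists g; auto. Qed.

Lemma ract_alpha (x : tX T) (h : car (tH T)) : beta x = d0 h -> alpha (ract x h) = alpha x.
Proof. intro H; symmetry; apply alpha_quot; exists h; auto. Qed.

Let tG_car_inh : inhabited (car (tG T)) :=
  match ginh (tG T) with inhabits a => inhabits (cid a) end.
Let tH_car_inh : inhabited (car (tH T)) :=
  match ginh (tH T) with inhabits b => inhabits (cid b) end.

(* [ldiv x y] is the [g] with [g . y = x] and [rdiv y x] the [h] with [y . h = x];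
   both are junk unless [beta x = beta y], resp. [alpha y = alpha x]. *)
Definition ldiv (x y : tX T) : car (tG T) :=
  epsilon tG_car_inh (fun g => d1 g = alpha y /\ lact g y = x).
Definition rdiv (y x : tX T) : car (tH T) :=
  epsilon tH_car_inh (fun h => d0 h = beta y /\ ract y h = x).

Lemma ldiv_spec (x y : tX T) : beta x = beta y -> d1 (ldiv x y) = alpha y /\ lact (ldiv x y) y = x.
Proof.
  intro H; unfold ldiv; apply epsilon_spec.
  destruct (proj1 (beta_quot y x) (eq_sym H)) as (g & H1 & H2); exists g; auto.
Qed.

Lemma rdiv_spec (y x : tX T) : alpha y = alpha x -> d0 (rdiv y x) = beta y /\ ract y (rdiv y x) = x.
Proof.
  intro H; unfold rdiv; apply epsilon_spec.
  destruct (proj1 (alpha_quot y x) H) as (h & H1 & H2); exists h; auto.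
Qed.

Lemma ldiv_d1 (x y : tX T) : beta x = beta y -> d1 (ldiv x y) = alpha y.
Proof. intro H; apply (ldiv_spec H). Qed.

Lemma lact_ldiv (x y : tX T) : beta x = beta y -> lact (ldiv x y) y = x.
Proof. intro H; apply (ldiv_spec H). Qed.

Lemma ldiv_d0 (x y : tX T) : beta x = beta y -> d0 (ldiv x y) = alpha x.
Proof.
  intro H; rewrite <- (lact_alpha (eq_sym (ldiv_d1 H))), lact_ldiv by exact H; reflexivity.
Qed.

Lemma rdiv_d0 (y x : tX T) : alpha y = alpha x -> d0 (rdiv y x) = beta y.
Proof. intro H; apply (rdiv_spec H). Qed.

Lemma ract_rdiv (y x : tX T) : alpha y = alpha x -> ract y (rdiv y x) = x.
Proof. intro H; apply (rdiv_spec H). Qed.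

Lemma rdiv_d1 (y x : tX T) : alpha y = alpha x -> d1 (rdiv y x) = beta x.
Proof.
  intro H; rewrite <- (ract_beta (eq_sym (rdiv_d0 H))), ract_rdiv by exact H; reflexivity.
Qed.

End BitorsorCalculus.

Ltac bitorsor_dom :=
  first
  [ congruence
  | match goal with
    | |- context [alpha (lact ?g ?x)] =>
        rewrite (lact_alpha (g := g) (x := x)) by bitorsor_dom; bitorsor_dom
    | |- context [beta (lact ?g ?x)] =>
        rewrite (lact_beta (g := g) (x := x)) by bitorsor_dom; bitorsor_dom
    | |- context [beta (ract ?x ?h)] =>
        rewrite (ract_beta (x := x) (h := h)) by bitorsor_dom; bitorsor_dom
    | |- context [alpha (ract ?x ?h)] =>
        rewrite (ract_alpha (x := x) (h := h)) by bitorsor_dom; bitorsor_dom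
    | |- context [d0 (ldiv ?x ?y)] =>
        rewrite (ldiv_d0 (x := x) (y := y)) by bitorsor_dom; bitorsor_dom
    | |- context [d1 (ldiv ?x ?y)] =>
        rewrite (ldiv_d1 (x := x) (y := y)) by bitorsor_dom; bitorsor_dom
    | |- context [d0 (rdiv ?y ?x)] =>
        rewrite (rdiv_d0 (y := y) (x := x)) by bitorsor_dom; bitorsor_dom
    | |- context [d1 (rdiv ?y ?x)] =>
        rewrite (rdiv_d1 (y := y) (x := x)) by bitorsor_dom; bitorsor_dom
    | |- context [d0 (ccomp ?f ?g)] =>
        rewrite (d0_comp (f := f) (g := g)) by bitorsor_dom; bitorsor_dom
    | |- context [d1 (ccomp ?f ?g)] =>
        rewrite (d1_comp (f := f) (g := g)) by bitorsor_dom; bitorsor_dom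
    | |- context [d0 (ginv _)] => rewrite d0_inv; bitorsor_dom
    | |- context [d1 (ginv _)] => rewrite d1_inv; bitorsor_dom
    | |- context [d0 (cid _)] => rewrite d0_id; bitorsor_dom
    | |- context [d1 (cid _)] => rewrite d1_id; bitorsor_dom
    end ].

Section BitorsorDivision.
Variable T : Bitorsor.
Implicit Types (g : car (tG T)) (h : car (tH T)) (x y z : tX T).

Lemma ldiv_unique x y g : alpha y = d1 g -> lact g y = x -> ldiv x y = g.
Proof.
  intros H1 H2; subst x.
  apply (lact_free (x := y)); try bitorsor_dom.
  rewrite lact_ldiv by bitorsor_dom; reflexivity.
Qed.

Lemma rdiv_unique x y h : beta y = d0 h -> ract y h = x -> rdiv y x = h.
Proof.
  intros H1 H2; subst x.
  apply (ract_free (x := y)); try bitorsor_dom.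
  rewrite ract_rdiv by bitorsor_dom; reflexivity.
Qed.

Lemma lact_ginv_l g x : alpha x = d1 g -> lact (ginv g) (lact g x) = x.
Proof. intro H; rewrite <- lact_assoc, comp_inv_l, <- H, lact_id by bitorsor_dom; reflexivity. Qed.

Lemma lact_ginv_r g x : alpha x = d0 g -> lact g (lact (ginv g) x) = x.
Proof. intro H; rewrite <- lact_assoc, comp_inv_r, <- H, lact_id by bitorsor_dom; reflexivity. Qed.

Lemma ract_ginv_r x h : beta x = d0 h -> ract (ract x h) (ginv h) = x.
Proof. intro H; rewrite ract_assoc, comp_inv_r, <- H, ract_id by bitorsor_dom; reflexivity. Qed.

Lemma ract_ginv_l x h : beta x = d1 h -> ract (ract x (ginv h)) h = x.
Proof. intro H; rewrite ract_assoc, comp_inv_l, <- H, ract_id by bitorsor_dom; reflexivity. Qed.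

Lemma ldiv_lact g x y : alpha x = d1 g -> beta x = beta y -> ldiv (lact g x) y = ccomp g (ldiv x y).
Proof.
  intros H1 H2; apply ldiv_unique; [bitorsor_dom|].
  rewrite lact_assoc, lact_ldiv by bitorsor_dom; reflexivity.
Qed.

Lemma ldiv_lact_ginv g x y :
  beta x = beta y -> alpha y = d0 g -> ldiv x (lact (ginv g) y) = ccomp (ldiv x y) g.
Proof.
  intros H1 H2; apply ldiv_unique; [bitorsor_dom|].
  rewrite lact_assoc, lact_ginv_r, lact_ldiv by bitorsor_dom; reflexivity.
Qed.

Lemma ldiv_ract x y h :
  beta x = d0 h -> beta y = d1 h -> ldiv (ract x h) y = ldiv x (ract y (ginv h)).
Proof.
  intros H1 H2; apply ldiv_unique; [bitorsor_dom|].
  rewrite <- (ract_ginv_l H2) at 2.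
  rewrite <- act_comm, lact_ldiv by bitorsor_dom; reflexivity.
Qed.

Lemma rdiv_ract x y h :
  alpha y = alpha x -> beta x = d0 h -> rdiv y (ract x h) = ccomp (rdiv y x) h.
Proof.
  intros H1 H2; apply rdiv_unique; [bitorsor_dom|].
  rewrite <- ract_assoc, ract_rdiv by bitorsor_dom; reflexivity.
Qed.

Lemma rdiv_ract_ginv x y h :
  beta y = d1 h -> alpha y = alpha x -> rdiv (ract y (ginv h)) x = ccomp h (rdiv y x).
Proof.
  intros H1 H2; apply rdiv_unique; [bitorsor_dom|].
  rewrite <- ract_assoc, ract_ginv_l, ract_rdiv by bitorsor_dom; reflexivity.
Qed.

Lemma rdiv_lact x y g :
  alpha y = d0 g -> alpha x = d1 g -> rdiv (lact (ginv g) y) x = rdiv y (lact g x).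
Proof.
  intros H1 H2; apply rdiv_unique; [bitorsor_dom|].
  rewrite act_comm, ract_rdiv, lact_ginv_l by bitorsor_dom; reflexivity.
Qed.

Lemma lact_ldiv_rdiv x y z :
  beta x = beta y -> alpha y = alpha z -> lact (ldiv x y) z = ract x (rdiv y z).
Proof.
  intros H1 H2.
  rewrite <- (ract_rdiv H2) at 1.
  rewrite <- act_comm, lact_ldiv by bitorsor_dom; reflexivity.
Qed.

Lemma ract_ginv_rdiv x y z :
  alpha x = alpha y -> beta y = beta z ->
  ract z (ginv (rdiv x y)) = lact (ginv (ldiv y z)) x.
Proof.
  intros H1 H2.
  assert (Hz : lact (ginv (ldiv y z)) (ract x (rdiv x y)) = z).
  { rewrite ract_rdiv by exact H1.
    rewrite <- (lact_ldiv H2) at 2; apply lact_ginv_l; bitorsor_dom. }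
  rewrite <- Hz at 1.
  rewrite act_comm, ract_ginv_r by bitorsor_dom; reflexivity.
Qed.

End BitorsorDivision.

(** * The fibration of a bitorsor *)

(* [CX x] is the arrow [alpha x -> beta x] and [CY x] its formal inverse [beta x -> alpha x]. *)
Inductive collage_ar (T : Bitorsor) :=
| CG (g : car (tG T)) | CH (h : car (tH T)) | CX (x : tX T) | CY (x : tX T).
Arguments CG {T} g. Arguments CH {T} h. Arguments CX {T} x. Arguments CY {T} x.

Section Collage.
Variable T : Bitorsor.

Definition collage_ob : Type := (cob (tG T) + cob (tH T))%type.

Definition collage_d0 (f : collage_ar T) : collage_ob :=
  match f with
  | CG g => inl (d0 g) | CH h => inr (d0 h) | CX x => inl (alpha x) | CY y => inr (beta y)
  end.

Definition collage_d1 (f : collage_ar T) : collage_ob :=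
  match f with
  | CG g => inl (d1 g) | CH h => inr (d1 h) | CX x => inr (beta x) | CY y => inl (alpha y)
  end.

Definition collage_id (e : collage_ob) : collage_ar T :=
  match e with inl a => CG (cid a) | inr b => CH (cid b) end.

Definition collage_comp (f f' : collage_ar T) : collage_ar T :=
  match f, f' with
  | CG g, CG g' => CG (ccomp g g')
  | CG g, CX x => CX (lact g x)
  | CX x, CH h => CX (ract x h)
  | CX x, CY y => CG (ldiv x y)
  | CH h, CH h' => CH (ccomp h h')
  | CH h, CY y => CY (ract y (ginv h))
  | CY y, CG g => CY (lact (ginv g) y)
  | CY y, CX x => CH (rdiv y x)
  | _, _ => f
  end.

Lemma collage_comp_assoc (f g h : collage_ar T) :
  collage_d1 f = collage_d0 g -> collage_d1 g = collage_d0 h ->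
  collage_comp (collage_comp f g) h = collage_comp f (collage_comp g h).
Proof.
  destruct f as [g1|h1|x1|y1], g as [g2|h2|x2|y2], h as [g3|h3|x3|y3]; cbn;
    intros H1 H2; try discriminate H1; try discriminate H2;
    injection H1 as H1; injection H2 as H2; f_equal.
  all: first
    [ apply comp_assoc | apply lact_assoc | apply act_comm | symmetry; apply act_comm
    | apply ract_assoc | apply ldiv_lact | apply ldiv_ract | apply ldiv_lact_ginv
    | symmetry; apply ldiv_lact_ginv | apply lact_ldiv_rdiv | apply rdiv_ract_ginv
    | apply rdiv_lact | symmetry; apply rdiv_ract | apply ract_ginv_rdiv
    | rewrite ginv_comp, ract_assoc | rewrite ginv_comp, lact_assoc ];
    bitorsor_dom.
Qed.

Definition collage : Category.
Proof.
  refine {| cob := collage_ob; car := collage_ar T; d0 := collage_d0; d1 := collage_d1;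
            cid := collage_id; ccomp := collage_comp; comp_assoc := collage_comp_assoc |}.
  - intros [a|b]; cbn; f_equal; apply d0_id.
  - intros [a|b]; cbn; f_equal; apply d1_id.
  - intros [g|h|x|y] [g'|h'|x'|y'] H; cbn in *; try discriminate H;
      injection H as H; f_equal; bitorsor_dom.
  - intros [g|h|x|y] [g'|h'|x'|y'] H; cbn in *; try discriminate H;
      injection H as H; f_equal; bitorsor_dom.
  - intros [g|h|x|y]; cbn; f_equal; rewrite ?ginv_id; auto using comp_id_l, lact_id, ract_id.
  - intros [g|h|x|y]; cbn; f_equal; rewrite ?ginv_id; auto using comp_id_r, lact_id, ract_id.
Defined.

Definition collage_proj : Functor collage Icat.
Proof.
  refine (@Build_Functor collage Icat
            (fun e : collage_ob => match e with inl _ => a0 | inr _ => b0 end)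
            (fun f : collage_ar T =>
               match f with CG _ => ida0 | CH _ => idb0 | CX _ => iarr | CY _ => iinv end)
            _ _ _ _).
  - intros [g|h|x|y]; reflexivity.
  - intros [g|h|x|y]; reflexivity.
  - intros [a|b]; reflexivity.
  - intros [g|h|x|y] [g'|h'|x'|y'] H; cbn in H; try discriminate H; reflexivity.
Defined.

Lemma collage_inverses (f : car collage) : exists f', is_inverse f f'.
Proof.
  destruct f as [g|h|x|y];
    [exists (CG (ginv g)) | exists (CH (ginv h)) | exists (CY x) | exists (CX y)];
    repeat split; cbn; f_equal; rewrite ?d0_inv, ?d1_inv, ?comp_inv_r, ?comp_inv_l; auto.
  - apply ldiv_unique; [bitorsor_dom | apply lact_id].
  - apply rdiv_unique; [bitorsor_dom | apply ract_id].
  - apply rdiv_unique; [bitorsor_dom | apply ract_id].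
  - apply ldiv_unique; [bitorsor_dom | apply lact_id].
Qed.

End Collage.

Definition fib_of_bitorsor (T : Bitorsor) : FibI.
Proof.
  refine {| fX := collage T; fgam := collage_proj T |}.
  - intros [a|b] u Hu; destruct u; cbn in Hu; try discriminate Hu.
    + exists (CG (cid a)); cbn; rewrite d1_id; repeat split.
      apply cartesian_of_inverses, collage_inverses.
    + destruct (alpha_surj a) as [x Hx].
      exists (CY x); cbn; rewrite Hx; repeat split.
      apply cartesian_of_inverses, collage_inverses.
    + exists (CH (cid b)); cbn; rewrite d1_id; repeat split.
      apply cartesian_of_inverses, collage_inverses.
    + destruct (beta_surj b) as [x Hx].
      exists (CX x); cbn; rewrite Hx; repeat split.
      apply cartesian_of_inverses, collage_inverses.
  - intros f _; apply collage_inverses.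
  - destruct (ginh (tG T)) as [a]; exact (inhabits (inl a)).
Defined.

Section CollageMap.
Variables (T T' : Bitorsor) (m : BitorsorMor T T').

Lemma bmor_ldiv (x y : tX T) : beta x = beta y -> far (mG m) (ldiv x y) = ldiv (mX m x) (mX m y).
Proof.
  intro H; symmetry; apply ldiv_unique.
  - rewrite m_alpha, f_d1, ldiv_d1 by exact H; reflexivity.
  - rewrite <- m_lact, lact_ldiv by bitorsor_dom; reflexivity.
Qed.

Lemma bmor_rdiv (y x : tX T) : alpha y = alpha x -> far (mH m) (rdiv y x) = rdiv (mX m y) (mX m x).
Proof.
  intro H; symmetry; apply rdiv_unique.
  - rewrite m_beta, f_d0, rdiv_d0 by exact H; reflexivity.
  - rewrite <- m_ract, ract_rdiv by bitorsor_dom; reflexivity.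
Qed.

Definition collage_map : Functor (collage T) (collage T').
Proof.
  refine (@Build_Functor (collage T) (collage T')
            (fun e : collage_ob T =>
               match e with inl a => inl (fob (mG m) a) | inr b => inr (fob (mH m) b) end)
            (fun f : collage_ar T =>
               match f with
               | CG g => CG (far (mG m) g) | CH h => CH (far (mH m) h)
               | CX x => CX (mX m x) | CY y => CY (mX m y)
               end) _ _ _ _).
  - intros [g|h|x|y]; cbn; f_equal; auto using f_d0, m_alpha, m_beta.
  - intros [g|h|x|y]; cbn; f_equal; auto using f_d1, m_alpha, m_beta.
  - intros [a|b]; cbn; f_equal; apply f_id.
  - intros [g|h|x|y] [g'|h'|x'|y'] H; cbn in *; try discriminate H; injection H as H; f_equal.
    all: rewrite ?m_lact, ?m_ract, ?functor_ginv, ?bmor_ldiv, ?bmor_rdiv, ?f_comp by bitorsor_dom;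
      reflexivity.
Defined.

Definition fib_of_bmor : FibMor (fib_of_bitorsor T) (fib_of_bitorsor T').
Proof.
  refine (@Build_FibMor (fib_of_bitorsor T) (fib_of_bitorsor T') collage_map _ _).
  - intros [a|b]; reflexivity.
  - intros [g|h|x|y]; reflexivity.
Defined.

End CollageMap.

Definition fib_of_bitorsor_functor : CFunctor lrTORS FibIcat.
Proof.
  refine (@Build_CFunctor lrTORS FibIcat fib_of_bitorsor (fun _ _ m => fib_of_bmor m) _ _ _).
  - intros T T' m m' (HGo & HGa & HHo & HHa & HX); split;
      [intros [a|b] | intros [g|h|x|y]]; cbn; f_equal; auto.
  - intro T; split; [intros [a|b] | intros [g|h|x|y]]; reflexivity.
  - intros T1 T2 T3 m n; split; [intros [a|b] | intros [g|h|x|y]]; reflexivity.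
Defined.

(** * The bitorsor of a fibration *)

Section FibrationInGroupoids.
Variables (X : Category) (gam : Functor X Icat).
Hypotheses (gam_fib : is_fibration gam) (gam_gpd : fibres_groupoids gam).

(* Lift an arrow [gam (d1 f) -> gam (d0 f)] to [k]; then [k ; f] is vertical, hence invertible. *)
Lemma fibration_left_inverse (f : car X) :
  exists s, d0 s = d1 f /\ d1 s = d0 f /\ ccomp s f = cid (d1 f).
Proof.
  destruct (I_connected (fob gam (d1 f)) (fob gam (d0 f))) as (u & U0 & U1).
  destruct (gam_fib U1) as (k & K1 & K2 & _).
  assert (Hkf : far gam (ccomp k f) = cid (fob gam (d0 (ccomp k f)))).
  { apply far_I_eq; rewrite ?d0_comp, ?d1_comp, ?d0_id, ?d1_id by exact K1;
      [reflexivity | rewrite <- f_d0, K2; exact (eq_sym U0)]. }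
  destruct (gam_gpd Hkf) as (w & W0 & W1 & _ & Wl).
  rewrite d0_comp, d1_comp in * by exact K1.
  exists (ccomp w k); split; [|split].
  - rewrite d0_comp by (rewrite W1; reflexivity); exact W0.
  - rewrite d1_comp by (rewrite W1; reflexivity); exact K1.
  - rewrite comp_assoc by (rewrite ?W1; auto); exact Wl.
Qed.

Lemma fibration_inverses (f : car X) : exists f', is_inverse f f'.
Proof.
  destruct (fibration_left_inverse f) as (s & S0 & S1 & Sf).
  destruct (fibration_left_inverse s) as (t & T0 & T1 & Ts).
  assert (Hft : f = t).
  { rewrite <- (comp_id_l f), <- S1, <- Ts, comp_assoc, Sf, <- S0, <- T1 by congruence.
    apply comp_id_r. }
  subst t; exists s; repeat split; congruence.
Qed.

End FibrationInGroupoids.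

Definition total_gpd (P : FibI) : Groupoid :=
  groupoid_of_inverses (fibration_inverses (@f_fib P) (@f_gpd P)) (fX_inh P).

Section Fibre.
Variables (C D : Category) (F : Functor C D).

Definition fibre_ob (o : cob D) : Type := {c : cob C | fob F c = o}.
Definition over (u : car D) : Type := {f : car C | far F f = u}.

Lemma over_d0 (u : car D) (f : over u) : fob F (d0 (proj1_sig f)) = d0 u.
Proof. rewrite <- f_d0, (proj2_sig f); reflexivity. Qed.

Lemma over_d1 (u : car D) (f : over u) : fob F (d1 (proj1_sig f)) = d1 u.
Proof. rewrite <- f_d1, (proj2_sig f); reflexivity. Qed.

Lemma over_comp (u v : car D) (f : over u) (g : over v) :
  d1 (proj1_sig f) = d0 (proj1_sig g) -> far F (ccomp (proj1_sig f) (proj1_sig g)) = ccomp u v.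
Proof. intro H; rewrite f_comp, (proj2_sig f), (proj2_sig g) by exact H; reflexivity. Qed.

(* Composites of non-composable arrows need not lie over [u]; they are replaced by [dflt]. *)
Definition restrict (u : car D) (f : car C) (dflt : over u) : over u :=
  match excluded_middle_informative (far F f = u) with
  | left p => exist _ f p
  | right _ => dflt
  end.

Lemma restrict_val (u : car D) (f : car C) (dflt : over u) :
  far F f = u -> proj1_sig (restrict f dflt) = f.
Proof. intro H; unfold restrict; destruct excluded_middle_informative; tauto. Qed.

Definition fibre_d0 (o : cob D) (f : over (cid o)) : fibre_ob o :=
  exist _ (d0 (proj1_sig f)) (eq_trans (over_d0 f) (d0_id o)).
Definition fibre_d1 (o : cob D) (f : over (cid o)) : fibre_ob o :=
  exist _ (d1 (proj1_sig f)) (eq_trans (over_d1 f) (d1_id o)).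
Definition fibre_id (o : cob D) (e : fibre_ob o) : over (cid o) :=
  exist _ (cid (proj1_sig e)) (eq_trans (f_id F _) (f_equal cid (proj2_sig e))).
Definition fibre_comp (o : cob D) (f g : over (cid o)) : over (cid o) :=
  restrict (ccomp (proj1_sig f) (proj1_sig g)) f.

Lemma fibre_comp_val (o : cob D) (f g : over (cid o)) :
  d1 (proj1_sig f) = d0 (proj1_sig g) ->
  proj1_sig (fibre_comp f g) = ccomp (proj1_sig f) (proj1_sig g).
Proof. intro H; apply restrict_val; rewrite over_comp by exact H; apply cid_comp_cid. Qed.

Definition fibre (o : cob D) : Category.
Proof.
  refine {| cob := fibre_ob o; car := over (cid o); d0 := @fibre_d0 o; d1 := @fibre_d1 o;
            cid := @fibre_id o; ccomp := @fibre_comp o |}.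
  - intro e; apply sig_eq; apply d0_id.
  - intro e; apply sig_eq; apply d1_id.
  - intros f g H; apply (f_equal (@proj1_sig _ _)) in H; apply sig_eq; cbn in *.
    rewrite fibre_comp_val by exact H; apply d0_comp, H.
  - intros f g H; apply (f_equal (@proj1_sig _ _)) in H; apply sig_eq; cbn in *.
    rewrite fibre_comp_val by exact H; apply d1_comp, H.
  - intro f; apply sig_eq; rewrite fibre_comp_val by apply d1_id; apply comp_id_l.
  - intro f; apply sig_eq; rewrite fibre_comp_val by (symmetry; apply d0_id); apply comp_id_r.
  - intros f g h H1 H2; apply (f_equal (@proj1_sig _ _)) in H1, H2; apply sig_eq; cbn in *.
    assert (H12 : d1 (proj1_sig (fibre_comp f g)) = d0 (proj1_sig h))
      by (rewrite fibre_comp_val, d1_comp; assumption).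
    assert (H23 : d1 (proj1_sig f) = d0 (proj1_sig (fibre_comp g h)))
      by (rewrite fibre_comp_val, d0_comp; assumption).
    rewrite !fibre_comp_val by assumption; apply comp_assoc; assumption.
Defined.

Definition over_lact (u : car D) (g : over (cid (d0 u))) (x : over u) : over u :=
  restrict (ccomp (proj1_sig g) (proj1_sig x)) x.
Definition over_ract (u : car D) (x : over u) (h : over (cid (d1 u))) : over u :=
  restrict (ccomp (proj1_sig x) (proj1_sig h)) x.

Lemma over_lact_val (u : car D) (g : over (cid (d0 u))) (x : over u) :
  d1 (proj1_sig g) = d0 (proj1_sig x) ->
  proj1_sig (over_lact g x) = ccomp (proj1_sig g) (proj1_sig x).
Proof. intro H; apply restrict_val; rewrite over_comp by exact H; apply comp_id_l. Qed.

Lemma over_ract_val (u : car D) (x : over u) (h : over (cid (d1 u))) :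
  d1 (proj1_sig x) = d0 (proj1_sig h) ->
  proj1_sig (over_ract x h) = ccomp (proj1_sig x) (proj1_sig h).
Proof. intro H; apply restrict_val; rewrite over_comp by exact H; apply comp_id_r. Qed.

End Fibre.

Definition fibre_gpd (G : Groupoid) (D : Category) (F : Functor G D) (o : cob D)
  (inh : inhabited (fibre_ob F o)) : Groupoid.
Proof.
  refine {| gcat := fibre F o;
            ginv := fun f : over F (cid o) =>
                      exist _ (ginv (proj1_sig f)) (far_ginv_vertical (proj2_sig f)) |}.
  - intro f; apply sig_eq; apply d0_inv.
  - intro f; apply sig_eq; apply d1_inv.
  - intro f; apply sig_eq; cbn; rewrite fibre_comp_val by (symmetry; apply d0_inv).
    apply comp_inv_r.
  - intro f; apply sig_eq; cbn; rewrite fibre_comp_val by apply d1_inv; apply comp_inv_l.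
  - exact inh.
Defined.

Section FibreMap.
Variables (C C' D : Category) (p : Functor C D) (q : Functor C' D) (F : Functor C C').
Hypotheses (F_ob : forall c, fob q (fob F c) = fob p c)
           (F_ar : forall f, far q (far F f) = far p f).

Definition over_map (u : car D) (f : over p u) : over q u :=
  exist _ (far F (proj1_sig f)) (eq_trans (F_ar _) (proj2_sig f)).

Definition fibre_map (o : cob D) : Functor (fibre p o) (fibre q o).
Proof.
  refine (@Build_Functor (fibre p o) (fibre q o)
            (fun e : fibre_ob p o =>
               exist _ (fob F (proj1_sig e)) (eq_trans (F_ob _) (proj2_sig e)))
            (@over_map (cid o)) _ _ _ _).
  - intro f; apply sig_eq; apply f_d0.
  - intro f; apply sig_eq; apply f_d1.
  - intro e; apply sig_eq; apply f_id.
  - intros f g H; apply (f_equal (@proj1_sig _ _)) in H; apply sig_eq; cbn in *.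
    rewrite !fibre_comp_val by (cbn; rewrite ?f_d0, ?f_d1, H; reflexivity); apply f_comp, H.
Defined.

End FibreMap.

(* Keep [Icat], [total_gpd] and [collage_proj] folded: unfolding them exposes the choice
   inside [ginv] and turns [car Icat], [cid (d0 iarr)], [far (collage_proj _) f] into forms
   that the lemmas above no longer match. *)
Ltac fib_simpl :=
  cbn -[Icat total_gpd collage_proj] in *.

Ltac over_dom :=
  fib_simpl;
  first
  [ reflexivity
  | assumption
  | symmetry; assumption
  | congruence
  | match goal with
    | |- context [proj1_sig (over_lact _ _)] => rewrite over_lact_val by over_dom; over_dom
    | |- context [proj1_sig (over_ract _ _)] => rewrite over_ract_val by over_dom; over_dom
    | |- context [proj1_sig (fibre_comp _ _)] => rewrite fibre_comp_val by over_dom; over_dom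
    | |- context [d0 (ccomp ?f ?g)] => rewrite (d0_comp (f := f) (g := g)) by over_dom; over_dom
    | |- context [d1 (ccomp ?f ?g)] => rewrite (d1_comp (f := f) (g := g)) by over_dom; over_dom
    | |- context [d0 (ginv _)] => rewrite d0_inv; over_dom
    | |- context [d1 (ginv _)] => rewrite d1_inv; over_dom
    | |- context [d0 (cid _)] => rewrite d0_id; over_dom
    | |- context [d1 (cid _)] => rewrite d1_id; over_dom
    | |- context [d0 (far _ _)] => rewrite f_d0; over_dom
    | |- context [d1 (far _ _)] => rewrite f_d1; over_dom
    end ].

Ltac over_vals :=
  repeat first
    [ rewrite over_lact_val by over_dom
    | rewrite over_ract_val by over_dom
    | rewrite fibre_comp_val by over_dom ].

Ltac unsig :=
  repeat match goal with
  | H : _ = _ |- _ => apply (f_equal (@proj1_sig _ _)) in H; fib_simpl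
  end;
  try (apply sig_eq; fib_simpl).

Section BitorsorOfFib.
Variable P : FibI.
Let TP := total_gpd P.
(* Typed over [TP] so that every term lives in [gcat TP], not in the convertible [fX P]. *)
Let gam : Functor TP Icat := fgam P.

Lemma total_lift (e : cob TP) (u : car Icat) :
  d1 u = fob gam e -> exists f : car TP, d1 f = e /\ far gam f = u.
Proof. intro H; destruct (f_fib H) as (f & Fe & Fu & _); exists f; auto. Qed.

Lemma fibre_ob_inhabited (o : Iob) : inhabited (fibre_ob gam o).
Proof.
  destruct (fX_inh P) as [e].
  destruct (I_connected o (fob gam e)) as (u & U0 & U1).
  destruct (total_lift U1) as (f & _ & Fu).
  constructor; exists (d0 f); rewrite <- f_d0, Fu; exact U0.
Qed.

Lemma over_ginv (u v : car Icat) (f : car TP) :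
  far gam f = u -> d0 v = d1 u -> d1 v = d0 u -> far gam (ginv f) = v.
Proof.
  intros Hf H0 H1; apply far_I_eq.
  - rewrite d0_inv, H0, <- f_d1, Hf; reflexivity.
  - rewrite d1_inv, H1, <- f_d0, Hf; reflexivity.
Qed.

Definition arr_alpha (x : over gam iarr) : fibre_ob gam (@d0 Icat iarr) :=
  exist _ (d0 (proj1_sig x)) (over_d0 x).
Definition arr_beta (x : over gam iarr) : fibre_ob gam (@d1 Icat iarr) :=
  exist _ (d1 (proj1_sig x)) (over_d1 x).

Lemma arr_beta_quot (x y : over gam iarr) :
  arr_beta x = arr_beta y <->
  exists g : over gam (cid (@d0 Icat iarr)), arr_alpha x = fibre_d1 g /\ y = over_lact g x.
Proof.
  split.
  - intro H; unsig.
    assert (Hg : far gam (ccomp (proj1_sig y) (ginv (proj1_sig x))) = ida0).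
    { rewrite f_comp, (proj2_sig y), (over_ginv (v := iinv) (proj2_sig x)) by over_dom;
        reflexivity. }
    exists (exist _ (ccomp (proj1_sig y) (ginv (proj1_sig x))) Hg); split; unsig; [over_dom|].
    over_vals; fib_simpl.
    rewrite comp_assoc, comp_inv_l, H by over_dom; symmetry; apply comp_id_r.
  - intros (g & Hg & ->); unsig; over_dom.
Qed.

Lemma arr_alpha_quot (x y : over gam iarr) :
  arr_alpha x = arr_alpha y <->
  exists h : over gam (cid (@d1 Icat iarr)), arr_beta x = fibre_d0 h /\ y = over_ract x h.
Proof.
  split.
  - intro H; unsig.
    assert (Hh : far gam (ccomp (ginv (proj1_sig x)) (proj1_sig y)) = idb0).
    { rewrite f_comp, (proj2_sig y), (over_ginv (v := iinv) (proj2_sig x)) by over_dom;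
        reflexivity. }
    exists (exist _ (ccomp (ginv (proj1_sig x)) (proj1_sig y)) Hh); split; unsig; [over_dom|].
    over_vals; fib_simpl.
    rewrite <- comp_assoc, comp_inv_r, H by over_dom; symmetry; apply comp_id_l.
  - intros (h & Hh & ->); unsig; over_dom.
Qed.

(* The fibres are taken over [d0 iarr] and [d1 iarr] (that is, [a0] and [b0]) so that the
   action lemmas over [iarr] apply syntactically. *)
Definition bitorsor_of_fib : Bitorsor.
Proof.
  refine {| tG := fibre_gpd (fibre_ob_inhabited (@d0 Icat iarr));
            tH := fibre_gpd (fibre_ob_inhabited (@d1 Icat iarr));
            tX := over gam iarr; alpha := arr_alpha; beta := arr_beta;
            lact := @over_lact _ _ gam iarr; ract := @over_ract _ _ gam iarr;
            beta_quot := arr_beta_quot; alpha_quot := arr_alpha_quot |}.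
  - intros g x H; unsig; over_dom.
  - intro x; unsig; over_vals; apply comp_id_l.
  - intros g g' x H1 H2; unsig; over_vals; apply comp_assoc; over_dom.
  - intros x h H; unsig; over_dom.
  - intro x; unsig; over_vals; apply comp_id_r.
  - intros x h h' H1 H2; unsig; over_vals; apply comp_assoc; over_dom.
  - intros g x h H1 H2; unsig; over_vals; apply comp_assoc; over_dom.
  - destruct (fibre_ob_inhabited (@d1 Icat iarr)) as [[e He]].
    destruct (total_lift (eq_sym He : @d1 Icat iarr = fob gam e)) as (f & _ & Ff).
    exact (inhabits (exist _ f Ff)).
  - intros [e He].
    destruct (total_lift (eq_sym He : @d1 Icat iinv = fob gam e)) as (k & Ke & Kf).
    exists (exist _ (ginv k) (over_ginv (v := iarr) Kf eq_refl eq_refl)); unsig.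
    rewrite d0_inv; exact Ke.
  - intros [e He].
    destruct (total_lift (eq_sym He : @d1 Icat iarr = fob gam e)) as (f & Fe & Ff).
    exists (exist _ f Ff); unsig; exact Fe.
  - intros g g' x H1 H2 E; unsig.
    rewrite !over_lact_val in E by over_dom.
    exact (comp_cancel_r (eq_sym H1) (eq_sym H2) E).
  - intros h h' x H1 H2 E; unsig.
    rewrite !over_ract_val in E by over_dom.
    exact (comp_cancel_l H1 H2 E).
Defined.

End BitorsorOfFib.

Section BitorsorOfFmor.
Variables (P Q : FibI) (m : FibMor P Q).
Notation m_fibre :=
  (@fibre_map (total_gpd P) (total_gpd Q) Icat (fgam P) (fgam Q) (mF m) (mF_ob m) (mF_ar m)).
Notation m_over :=
  (@over_map (total_gpd P) (total_gpd Q) Icat (fgam P) (fgam Q) (mF m) (mF_ar m) iarr).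

Definition bitorsor_of_fmor : BitorsorMor (bitorsor_of_fib P) (bitorsor_of_fib Q).
Proof.
  refine (@Build_BitorsorMor (bitorsor_of_fib P) (bitorsor_of_fib Q)
            (m_fibre (@d0 Icat iarr)) (m_fibre (@d1 Icat iarr)) m_over _ _ _ _).
  - intro x; unsig; apply f_d0.
  - intro x; unsig; apply f_d1.
  - intros g x H; unsig; over_vals; apply f_comp; over_dom.
  - intros x h H; unsig; over_vals; apply f_comp; over_dom.
Defined.

End BitorsorOfFmor.

Definition bitorsor_of_fib_functor : CFunctor FibIcat lrTORS.
Proof.
  refine (@Build_CFunctor FibIcat lrTORS bitorsor_of_fib (fun _ _ m => bitorsor_of_fmor m) _ _ _).
  - intros P Q m m' [Hob Har]; repeat split; intro; apply sig_eq; cbn; auto.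
  - intro P; repeat split; intro; apply sig_eq; reflexivity.
  - intros P1 P2 P3 m n; repeat split; intro; apply sig_eq; reflexivity.
Defined.

(** * Unit and counit *)

Section Unit.
Variable T : Bitorsor.
Notation T2 := (bitorsor_of_fib (fib_of_bitorsor T)).

Definition bitorsor_unit_G : Functor (tG T) (tG T2).
Proof.
  refine (@Build_Functor (tG T) (tG T2)
            (fun a => exist _ (inl a) eq_refl) (fun g => exist _ (CG g) eq_refl) _ _ _ _).
  1-3: intros; apply sig_eq; reflexivity.
  intros g g' H; apply sig_eq; fib_simpl; rewrite fibre_comp_val by (cbn; congruence); reflexivity.
Defined.

Definition bitorsor_unit_H : Functor (tH T) (tH T2).
Proof.
  refine (@Build_Functor (tH T) (tH T2)
            (fun b => exist _ (inr b) eq_refl) (fun h => exist _ (CH h) eq_refl) _ _ _ _).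
  1-3: intros; apply sig_eq; reflexivity.
  intros h h' H; apply sig_eq; fib_simpl; rewrite fibre_comp_val by (cbn; congruence); reflexivity.
Defined.

Definition bitorsor_unit : BitorsorMor T T2.
Proof.
  refine (@Build_BitorsorMor T T2 bitorsor_unit_G bitorsor_unit_H
            (fun x => exist _ (CX x) eq_refl) _ _ _ _).
  1-2: intros; apply sig_eq; reflexivity.
  - intros g x H; apply sig_eq; fib_simpl; rewrite over_lact_val by (cbn; congruence); reflexivity.
  - intros x h H; apply sig_eq; fib_simpl; rewrite over_ract_val by (cbn; congruence); reflexivity.
Defined.

Lemma bitorsor_unit_bijective : bmor_bijective bitorsor_unit.
Proof.
  repeat split.
  all: try (intros u v E; apply (f_equal (@proj1_sig _ _)) in E; injection E; auto).
  all: intros [e p]; destruct e; cbn in p; try discriminate p; eexists; apply sig_eq; reflexivity.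
Qed.

End Unit.

Lemma bitorsor_unit_natural (T T' : Bitorsor) (m : BitorsorMor T T') :
  bmor_eq (bmor_comp m (bitorsor_unit T'))
          (bmor_comp (bitorsor_unit T) (bitorsor_of_fmor (fib_of_bmor m))).
Proof. repeat split; intro; apply sig_eq; reflexivity. Qed.

Section Counit.
Variable P : FibI.
Notation TP := (total_gpd P).
Notation gam := (fgam P).
Notation P2 := (fib_of_bitorsor (bitorsor_of_fib P)).

Lemma ldiv_val (x y : tX (bitorsor_of_fib P)) :
  beta x = beta y -> proj1_sig (ldiv x y) = ccomp (proj1_sig x) (ginv (g := TP) (proj1_sig y)).
Proof.
  intro H.
  assert (Hl := lact_ldiv H); assert (Hd := ldiv_d1 H); unsig.
  rewrite over_lact_val in Hl by over_dom.
  rewrite <- Hl, comp_assoc, comp_inv_r, <- Hd by over_dom; symmetry; apply comp_id_r.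
Qed.

Lemma rdiv_val (y x : tX (bitorsor_of_fib P)) :
  alpha y = alpha x -> proj1_sig (rdiv y x) = ccomp (ginv (g := TP) (proj1_sig y)) (proj1_sig x).
Proof.
  intro H.
  assert (Hr := ract_rdiv H); assert (Hd := rdiv_d0 H); unsig.
  rewrite over_ract_val in Hr by over_dom.
  rewrite <- Hr, <- comp_assoc, comp_inv_l, <- Hd by over_dom; symmetry; apply comp_id_l.
Qed.

Definition fib_counit_functor : Functor (collage (bitorsor_of_fib P)) TP.
Proof.
  refine (@Build_Functor (collage (bitorsor_of_fib P)) TP
            (fun e : collage_ob _ => match e with inl s => proj1_sig s | inr s => proj1_sig s end)
            (fun f : collage_ar _ =>
               match f with
               | CG g => proj1_sig g | CH h => proj1_sig h
               | CX x => proj1_sig x | CY y => ginv (proj1_sig y)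
               end) _ _ _ _).
  - intros [g|h|x|y]; fib_simpl; rewrite ?d0_inv; reflexivity.
  - intros [g|h|x|y]; fib_simpl; rewrite ?d1_inv; reflexivity.
  - intros [a|b]; reflexivity.
  - intros [g|h|x|y] [g'|h'|x'|y'] H; fib_simpl; try discriminate H; injection H as H.
    all: rewrite ?ldiv_val, ?rdiv_val by (apply sig_eq; exact H); over_vals; fib_simpl;
      rewrite ?ginv_comp, ?ginv_ginv by over_dom; reflexivity.
Defined.

Definition fib_counit : FibMor P2 P.
Proof.
  refine (@Build_FibMor P2 P fib_counit_functor _ _).
  - intros [s|s]; exact (proj2_sig s).
  - intros [g|h|x|y]; [exact (proj2_sig g) | exact (proj2_sig h) | exact (proj2_sig x) |].
    exact (over_ginv (v := iinv) (proj2_sig y) eq_refl eq_refl).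
Defined.

Lemma fib_counit_bijective : functor_bijective (mF fib_counit).
Proof.
  split; split.
  - intros [s|s] [t|t] E; cbn in E; try (f_equal; apply sig_eq; exact E);
      exfalso; pose proof (proj2_sig s) as Hs; pose proof (proj2_sig t) as Ht;
      cbn in Hs, Ht; rewrite E in Hs; congruence.
  - intro e; destruct (fob gam e) eqn:E;
      [exists (inl (exist _ e E)) | exists (inr (exist _ e E))]; reflexivity.
  - intros f f' E.
    assert (Hproj := f_equal (far gam) E); rewrite !(mF_ar fib_counit) in Hproj.
    destruct f as [g|h|x|y], f' as [g'|h'|x'|y']; fib_simpl; try discriminate Hproj;
      f_equal; apply sig_eq; auto.
    rewrite <- (ginv_ginv (G := TP) (proj1_sig y)), E; apply ginv_ginv.
  - intro f; destruct (far gam f) eqn:E.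
    + exists (@CG (bitorsor_of_fib P) (exist _ f E)); reflexivity.
    + exists (@CH (bitorsor_of_fib P) (exist _ f E)); reflexivity.
    + exists (@CX (bitorsor_of_fib P) (exist _ f E)); reflexivity.
    + exists (@CY (bitorsor_of_fib P)
                (exist _ (ginv (g := TP) f) (over_ginv (v := iarr) E eq_refl eq_refl))).
      exact (ginv_ginv (G := TP) f).
Qed.

End Counit.

Lemma fib_counit_natural (P Q : FibI) (m : FibMor P Q) :
  fmor_eq (fmor_comp (fib_of_bmor (bitorsor_of_fmor m)) (fib_counit Q))
          (fmor_comp (fib_counit P) m).
Proof.
  split; [intros [s|s] | intros [g|h|x|y]]; try reflexivity.
  symmetry; exact (functor_ginv (G := total_gpd P) (G' := total_gpd Q) (mF m) (proj1_sig y)).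
Qed.

Theorem theorem3 : CatEquiv lrTORS FibIcat.
Proof.
  exists fib_of_bitorsor_functor, bitorsor_of_fib_functor; split.
  - apply (@natiso_of_natural_inverse lrTORS lrTORS _ _ _ _
             (fun T => bmor_inverse (bitorsor_unit_bijective T)) bitorsor_unit).
    + intro T; apply bmor_inverse_r.
    + intro T; apply bmor_inverse_l.
    + intros T T' m; apply bitorsor_unit_natural.
  - exists fib_counit, (fun P => fmor_inverse (fib_counit_bijective P)); split; [|split].
    + intro P; apply fmor_inverse_l.
    + intro P; apply fmor_inverse_r.
    + intros P Q m; apply fib_counit_natural.
Qed.
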